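(* Let $N\ge 2$ be even and consider the Clos network $C_{N,3}$. Let $X_1$ consist of $N/2$ flows from $I_1$ to $O_1$ and $N/2$ flows from $I_2$ to $O_2$; let $X_2$ consist of $N/2$ flows from $I_1$ to $O_2$; let $Y_2$ consist of $N/2$ flows from $I_3$ to $O_1$ and $N/2$ flows from $I_3$ to $O_2$; all flows have demand $1$, and distinct flows incident to a common input (resp. output) switch use distinct source (resp. destination) servers of that switch. Let $X=X_1\cup X_2$ and $Y=X_1\cup Y_2$, and let $\mathcal{M}=\{M_1,\dots,M_N\}$. Then: (P1) in every link-disjoint routing of $X$, the $N/2$ flows $(I_1,O_1)$ are assigned to $N/2$ distinct middle switches forming a set $\mathcal{N}$, and the $N/2$ flows $(I_2,O_2)$ are assigned to distinct middle switches forming the same set $\mathcal{N}$; (P2) in every link-disjoint routing of $Y$, the $N/2$ flows $(I_1,O_1)$ are assigned to $N/2$ distinct middle switches forming a set $\mathcal{N}$, and the $N/2$ flows $(I_2,O_2)$ are assigned to distinct middle switches forming the set $\mathcal{M}\setminus\mathcal{N}$. Consequently, no routing of $X_1$ satisfies both the restriction of (P1) and of (P2) to $X_1$.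
   Context: Clos network $C_{N,R}$: a directed graph with $N$ middle switches $M_1,\dots,M_N$, $R$ input switches $I_1,\dots,I_R$, $R$ output switches $O_1,\dots,O_R$, source servers $s_i^k$ attached to $I_i$ and destination servers $t_i^k$ attached to $O_i$ ($k\in[N]$), with edges $s_i^kI_i$, $I_iM_m$, $M_mO_i$, $O_it_i^k$. A routing assigns each flow a single middle switch (i.e. a path input switch – middle switch – output switch). A routing is link-disjoint if no link $I_iM_m$ or $M_mO_j$ is used by two flows. *)

From mathcomp Require Import all_boot.
Set Implicit Arguments. Unset Strict Implicit. Unset Printing Implicit Defensive.

(* Clos network C_{N,R}: input switches I_i and output switches O_i indexed by
   'I_R, middle switches M_m indexed by 'I_N, and each input (resp. output)
   switch has N source (resp. destination) servers indexed by 'I_N.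
   A flow is (source switch, source server, destination switch, destination
   server); all flows have demand 1. *)
Definition flow (R N : nat) : finType := ('I_R * 'I_N * ('I_R * 'I_N))%type.

Definition src_sw {R N} (f : flow R N) : 'I_R := f.1.1.
Definition src_srv {R N} (f : flow R N) : 'I_N := f.1.2.
Definition dst_sw {R N} (f : flow R N) : 'I_R := f.2.1.
Definition dst_srv {R N} (f : flow R N) : 'I_N := f.2.2.

Definition well_formed {R N} (F : {set flow R N}) : Prop :=
  forall f g, f \in F -> g \in F -> f != g ->
    (src_sw f = src_sw g -> src_srv f <> src_srv g) /\
    (dst_sw f = dst_sw g -> dst_srv f <> dst_srv g).

Definition routing (R N : nat) := flow R N -> 'I_N.

(* Link-disjoint on the flow set F: no link I_i M_m or M_m O_j is used by two
   distinct flows of F. *)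
Definition link_disjoint {R N} (F : {set flow R N}) (r : routing R N) : Prop :=
  forall f g, f \in F -> g \in F -> f != g ->
    (src_sw f = src_sw g -> r f <> r g) /\
    (dst_sw f = dst_sw g -> r f <> r g).

Definition flows_between {R N} (F : {set flow R N}) (i j : 'I_R) : {set flow R N} :=
  [set f in F | (src_sw f == i) && (dst_sw f == j)].

(* Switch indices in C_{N,3}: I_1,I_2,I_3 are 0,1,2 (same for outputs). *)
Definition sw1 : 'I_3 := @Ordinal 3 0 isT.
Definition sw2 : 'I_3 := @Ordinal 3 1 isT.
Definition sw3 : 'I_3 := @Ordinal 3 2 isT.

From mathcomp Require Import all_boot.

Set Implicit Arguments.
Unset Strict Implicit.
Unset Printing Implicit Defensive.

(* A link I_i M_m (or M_m O_j) carries at most one flow, so flows sharing an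
   input or output switch get distinct middle switches; two groups of N/2
   such flows thus use all N middle switches and receive complementary sets.
   In X, the (I1,O1)-flows (sharing I1 with X2) and the (I2,O2)-flows
   (sharing O2 with X2) both receive the complement of the set used by X2.
   In Y, the path O1 - I3 - O2 through the two halves of Y2 takes the
   complement three times.  Finally no set of middle switches equals its own
   complement. *)

Lemma imset_setC_of_partition (T : finType) n (f : T -> 'I_n) (F G : {set T}) :
  [disjoint F & G] -> {in F :|: G &, injective f} -> #|F| + #|G| = n ->
  f @: G = ~: (f @: F).
Proof.
move=> dFG injf cardFG.
have imT : f @: (F :|: G) = setT.
  apply/eqP; rewrite eqEcard subsetT cardsT card_ord (card_in_imset injf).
  by rewrite cardsU (disjoint_setI0 dFG) cards0 subn0 cardFG leqnn.
have dimFG : [disjoint f @: G & f @: F].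
  rewrite -setI_eq0 -imsetI; first by rewrite setIC (disjoint_setI0 dFG) imset0.
  by move=> x y xG yF; apply: injf; rewrite inE ?xG ?yF ?orbT.
by rewrite -setTD -imT imsetU setDUl setDv set0U; apply/esym/setDidPl.
Qed.

Section FlowsBetween.

Variables R N : nat.
Implicit Types (F S U V : {set flow R N}) (r : routing R N).

Lemma flows_betweenP U i j f :
  reflect [/\ f \in U, src_sw f = i & dst_sw f = j] (f \in flows_between U i j).
Proof.
by rewrite !inE; apply: (iffP and3P) => -[fU /eqP si /eqP dj].
Qed.

Lemma flows_between_sub U i j : flows_between U i j \subset U.
Proof. by apply/subsetP => f /flows_betweenP[]. Qed.

Lemma disjoint_flows_between U V i j k l : (i != k) || (j != l) ->
  [disjoint flows_between U i j & flows_between V k l].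
Proof.
move=> ne; rewrite disjoints_subset; apply/subsetP => f.
move=> /flows_betweenP[_ si dj]; rewrite inE; apply: contraL ne.
by case/flows_betweenP => _ <- <-; rewrite si dj !eqxx.
Qed.

Lemma link_disjoint_inj_shared F S r :
  link_disjoint F r -> S \subset F ->
  {in S &, forall f g, src_sw f = src_sw g \/ dst_sw f = dst_sw g} ->
  {in S &, injective r}.
Proof.
move=> ldr sSF shared f g fS gS rfg; apply/eqP; apply: contraT => nfg.
have [src_ne dst_ne] := ldr f g (subsetP sSF f fS) (subsetP sSF g gS) nfg.
by case: (shared f g fS gS) => [/src_ne | /dst_ne].
Qed.

Lemma flows_betweenU_sub F U V {i j k l} : U \subset F -> V \subset F ->
  flows_between U i j :|: flows_between V k l \subset F.
Proof.
by move=> sUF sVF; rewrite subUset !(subset_trans (flows_between_sub _ _ _)).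
Qed.

Lemma link_disjoint_inj_flows_between F U r {i j} :
  link_disjoint F r -> U \subset F -> {in flows_between U i j &, injective r}.
Proof.
move=> ldr sUF; apply: link_disjoint_inj_shared ldr _ _.
  exact: subset_trans (flows_between_sub _ _ _) sUF.
by move=> f g /flows_betweenP[_ -> _] /flows_betweenP[_ -> _]; left.
Qed.

Lemma link_disjoint_inj_input F U V r {i j k} :
  link_disjoint F r -> U \subset F -> V \subset F ->
  {in flows_between U i j :|: flows_between V i k &, injective r}.
Proof.
move=> ldr sUF sVF.
apply: link_disjoint_inj_shared ldr (flows_betweenU_sub sUF sVF) _ => f g fS gS.
by left; case/setUP: fS gS => /flows_betweenP[_ -> _]
  /setUP[] /flows_betweenP[_ -> _].
Qed.

Lemma link_disjoint_inj_output F U V r {i j k} :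
  link_disjoint F r -> U \subset F -> V \subset F ->
  {in flows_between U i k :|: flows_between V j k &, injective r}.
Proof.
move=> ldr sUF sVF.
apply: link_disjoint_inj_shared ldr (flows_betweenU_sub sUF sVF) _ => f g fS gS.
by right; case/setUP: fS gS => /flows_betweenP[_ _ ->]
  /setUP[] /flows_betweenP[_ _ ->].
Qed.

Lemma link_disjoint_imset_setC_input F U V r i j k :
  link_disjoint F r -> U \subset F -> V \subset F ->
  j != k -> #|flows_between U i j| + #|flows_between V i k| = N ->
  r @: flows_between V i k = ~: (r @: flows_between U i j).
Proof.
move=> ldr sUF sVF ne_jk.
apply: imset_setC_of_partition (link_disjoint_inj_input ldr sUF sVF).
by apply: disjoint_flows_between; rewrite ne_jk orbT.
Qed.

Lemma link_disjoint_imset_setC_output F U V r i j k :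
  link_disjoint F r -> U \subset F -> V \subset F ->
  i != j -> #|flows_between U i k| + #|flows_between V j k| = N ->
  r @: flows_between V j k = ~: (r @: flows_between U i k).
Proof.
move=> ldr sUF sVF ne_ij.
apply: imset_setC_of_partition (link_disjoint_inj_output ldr sUF sVF).
by apply: disjoint_flows_between; rewrite ne_ij.
Qed.

End FlowsBetween.

Section ClosThreeRoutings.

Variables (N : nat) (X1 X2 Y2 : {set flow 3 N}).
Hypothesis N_even : ~~ odd N.

Let A := flows_between X1 sw1 sw1.
Let B := flows_between X1 sw2 sw2.
Let C := flows_between Y2 sw3 sw1.
Let D := flows_between Y2 sw3 sw2.
Let X2' := flows_between X2 sw1 sw2.

Hypotheses (cardA : #|A| = N./2) (cardB : #|B| = N./2).

Let halves : N./2 + N./2 = N.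
Proof. by rewrite addnn -[RHS]odd_double_half (negbTE N_even). Qed.

Lemma link_disjoint_inj_X1 F r : link_disjoint (X1 :|: F) r ->
  {in A &, injective r} /\ {in B &, injective r}.
Proof.
by move=> ldr; split; apply: link_disjoint_inj_flows_between ldr (subsetUl _ _).
Qed.

Lemma link_disjoint_X_imset_eq r : #|X2'| = N./2 ->
  link_disjoint (X1 :|: X2) r -> r @: B = r @: A.
Proof.
move=> cardX2 ldr; have [sX1 sX2] := (subsetUl X1 X2, subsetUr X1 X2).
have eAX : r @: X2' = ~: (r @: A).
  apply: link_disjoint_imset_setC_input ldr sX1 sX2 _ _ => //.
  by rewrite cardA cardX2 halves.
have eBX : r @: X2' = ~: (r @: B).
  apply: link_disjoint_imset_setC_output ldr sX1 sX2 _ _ => //.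
  by rewrite cardB cardX2 halves.
by apply: setC_inj; rewrite -eAX -eBX.
Qed.

Lemma link_disjoint_Y_imset_setC r : #|C| = N./2 -> #|D| = N./2 ->
  link_disjoint (X1 :|: Y2) r -> r @: B = ~: (r @: A).
Proof.
move=> cardC cardD ldr; have [sX1 sY2] := (subsetUl X1 Y2, subsetUr X1 Y2).
have eAC : r @: C = ~: (r @: A).
  apply: link_disjoint_imset_setC_output ldr sX1 sY2 _ _ => //.
  by rewrite cardA cardC halves.
have eBD : r @: D = ~: (r @: B).
  apply: link_disjoint_imset_setC_output ldr sX1 sY2 _ _ => //.
  by rewrite cardB cardD halves.
have eCD : r @: D = ~: (r @: C).
  apply: (link_disjoint_imset_setC_input ldr sY2 sY2) => //.
  by rewrite cardC cardD halves.
by apply: setC_inj; rewrite -eBD eCD eAC.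
Qed.

End ClosThreeRoutings.

Theorem mainTheorem11 (N : nat) (X1 X2 Y2 : {set flow 3 N}) :
  2 <= N -> ~~ odd N ->
  (* X1: N/2 flows (I1,O1) and N/2 flows (I2,O2), nothing else *)
  X1 = flows_between X1 sw1 sw1 :|: flows_between X1 sw2 sw2 ->
  #|flows_between X1 sw1 sw1| = N./2 ->
  #|flows_between X1 sw2 sw2| = N./2 ->
  (* X2: N/2 flows (I1,O2) *)
  X2 = flows_between X2 sw1 sw2 ->
  #|X2| = N./2 ->
  (* Y2: N/2 flows (I3,O1) and N/2 flows (I3,O2) *)
  Y2 = flows_between Y2 sw3 sw1 :|: flows_between Y2 sw3 sw2 ->
  #|flows_between Y2 sw3 sw1| = N./2 ->
  #|flows_between Y2 sw3 sw2| = N./2 ->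
  (* distinct servers for distinct flows at a common switch *)
  well_formed (X1 :|: X2) ->
  well_formed (X1 :|: Y2) ->
  let A := flows_between X1 sw1 sw1 in
  let B := flows_between X1 sw2 sw2 in
  (* (P1) *)
  (forall r : routing 3 N, link_disjoint (X1 :|: X2) r ->
     {in A &, injective r} /\ {in B &, injective r} /\ r @: B = r @: A) /\
  (* (P2) *)
  (forall r : routing 3 N, link_disjoint (X1 :|: Y2) r ->
     {in A &, injective r} /\ {in B &, injective r} /\ r @: B = ~: (r @: A)) /\
  (* consequence *)
  ~ (exists r : routing 3 N,
       {in A &, injective r} /\ {in B &, injective r} /\
       r @: B = r @: A /\ r @: B = ~: (r @: A)).
Proof.
move=> N_ge2 N_even _ cardA cardB defX2 cardX2 _ cardC cardD _ _ A B.
rewrite defX2 in cardX2.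
split; [move=> r ldr | split; [move=> r ldr |]].
- have [injA injB] := link_disjoint_inj_X1 ldr.
  by do 2!split=> //; apply: link_disjoint_X_imset_eq ldr.
- have [injA injB] := link_disjoint_inj_X1 ldr.
  by do 2!split=> //; apply: link_disjoint_Y_imset_setC ldr.
- case=> r [_ [_ [eq_same eq_compl]]]; move: eq_compl; rewrite eq_same.
  by move/setP/(_ (Ordinal (ltnW N_ge2))); rewrite inE; case: (_ \in _).
Qed.
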